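(* Let $D\subset\mathbb R^N$ be open and convex and $w:D\to\mathbb R$ convex. Suppose that for some $x_0\in D$, $$w(x)=w(x_0)+\langle p_0,x-x_0\rangle+\tfrac12\langle A(x-x_0),x-x_0\rangle+o(\|x-x_0\|^2)$$ for some $p_0\in\mathbb R^N$ and a symmetric $N\times N$ matrix $A$. Let $f$ be a continuously differentiable real function on a neighbourhood of $p_0$. Then $$\lim_{x\to x_0}\ \sup_{p\in\partial w(x)}\frac{|f(p)-f(p_0)-\langle\nabla f(p_0),A(x-x_0)\rangle|}{\|x-x_0\|}=0,$$ where $\partial w(x)$ is the subdifferential of $w$ at $x$. *)

From HB Require Import structures.
From mathcomp Require Import all_boot all_order all_algebra.
From mathcomp Require Import reals.
Set Implicit Arguments. Unset Strict Implicit. Unset Printing Implicit Defensive.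
Import Order.TTheory GRing.Theory Num.Theory.
Local Open Scope ring_scope.

Section Defs.
Variables (R : realType) (N : nat).
Notation V := 'cV[R]_N.

Definition dotv (u v : V) : R := \sum_(i < N) u i 0 * v i 0.
Definition normv (u : V) : R := Num.sqrt (dotv u u).

Definition open_set (D : V -> Prop) : Prop :=
  forall x, D x -> exists r : R, 0 < r /\ forall y, normv (y - x) < r -> D y.

Definition convex_set (D : V -> Prop) : Prop :=
  forall x y (t : R), D x -> D y -> 0 <= t <= 1 -> D ((1 - t) *: x + t *: y).

Definition convex_on (D : V -> Prop) (w : V -> R) : Prop :=
  forall x y (t : R), D x -> D y -> 0 <= t <= 1 ->
    w ((1 - t) *: x + t *: y) <= (1 - t) * w x + t * w y.

Definition subdiff (D : V -> Prop) (w : V -> R) (x p : V) : Prop :=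
  D x /\ forall y, D y -> w x + dotv p (y - x) <= w y.

Definition second_order_expansion (D : V -> Prop) (w : V -> R) (x0 p0 : V)
    (A : 'M[R]_N) : Prop :=
  forall eps : R, 0 < eps -> exists delta : R, 0 < delta /\
    forall x, D x -> normv (x - x0) < delta ->
      `| w x - w x0 - dotv p0 (x - x0) - 2^-1 * dotv (A *m (x - x0)) (x - x0) |
        <= eps * normv (x - x0) ^+ 2.

Definition has_gradient (f : V -> R) (p g : V) : Prop :=
  forall eps : R, 0 < eps -> exists delta : R, 0 < delta /\
    forall q, normv (q - p) < delta ->
      `| f q - f p - dotv g (q - p) | <= eps * normv (q - p).

Definition C1_on_ball (f : V -> R) (grad : V -> V) (p0 : V) (r : R) : Prop :=
  0 < r /\
  (forall p, normv (p - p0) < r -> has_gradient f p (grad p)) /\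
  (forall p, normv (p - p0) < r ->
     forall eps : R, 0 < eps -> exists delta : R, 0 < delta /\
       forall q, normv (q - p0) < r -> normv (q - p) < delta ->
         normv (grad q - grad p) < eps).

End Defs.

(* Write h = x - x0 and let p be a subgradient of w at x.  Testing the
   subgradient inequality at x + z, where z points along
   q = p - p0 - A h and has length proportional to |h|, and comparing the
   second-order expansions of w at x and at x + z (the symmetry of A makes
   the cross term equal to <A h, z>), gives |q| = o(|h|).  Hence
   p - p0 = A h + o(|h|), and differentiability of f at p0 turns this into
   f p - f p0 = <grad f p0, A h> + o(|h|). *)
From HB Require Import structures.
From mathcomp Require Import all_boot all_order all_algebra.
From mathcomp Require Import reals.
From mathcomp Require Import ring lra.
Set Implicit Arguments. Unset Strict Implicit. Unset Printing Implicit Defensive.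
Import Order.TTheory GRing.Theory Num.Theory.
Local Open Scope ring_scope.

Section EuclideanSpace.
Variables (R : realType) (N : nat).
Implicit Types (u v z : 'cV[R]_N) (a : R).

Lemma dotvC u v : dotv u v = dotv v u.
Proof. by apply: eq_bigr => i _; rewrite mulrC. Qed.

Lemma dotvDl u v z : dotv (u + v) z = dotv u z + dotv v z.
Proof. by rewrite /dotv -big_split; apply: eq_bigr => i _; rewrite mxE mulrDl. Qed.

Lemma dotvZl a u v : dotv (a *: u) v = a * dotv u v.
Proof. by rewrite /dotv mulr_sumr; apply: eq_bigr => i _; rewrite mxE mulrA. Qed.

Lemma dotvNl u v : dotv (- u) v = - dotv u v.
Proof. by rewrite -scaleN1r dotvZl mulN1r. Qed.

Lemma dotvBl u v z : dotv (u - v) z = dotv u z - dotv v z.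
Proof. by rewrite dotvDl dotvNl. Qed.

Lemma dotvDr u v z : dotv z (u + v) = dotv z u + dotv z v.
Proof. by rewrite dotvC dotvDl !(dotvC z). Qed.

Lemma dotvZr a u v : dotv v (a *: u) = a * dotv v u.
Proof. by rewrite dotvC dotvZl dotvC. Qed.

Lemma dotvBr u v z : dotv z (u - v) = dotv z u - dotv z v.
Proof. by rewrite dotvC dotvBl !(dotvC z). Qed.

Lemma dotv0r u : dotv u 0 = 0.
Proof. by rewrite -(scale0r 0) dotvZr mul0r. Qed.

Lemma dotvv_ge0 u : 0 <= dotv u u.
Proof. by apply: sumr_ge0 => i _; rewrite -expr2 sqr_ge0. Qed.

Lemma dotvv_eq0 u : dotv u u = 0 -> u = 0.
Proof.
move=> /psumr_eq0P uu0; apply/matrixP => i j; rewrite ord1 mxE.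
have /eqP := uu0 (fun k _ => sqr_ge0 (u k 0)) i isT.
by rewrite mulf_eq0 orbb => /eqP.
Qed.

Lemma dotv_mulmx (A : 'M[R]_N) u v : dotv (A *m u) v = dotv u (A^T *m v).
Proof.
rewrite /dotv (eq_bigr (fun i => \sum_j A i j * u j 0 * v i 0)); last first.
  by move=> i _; rewrite mxE big_distrl.
rewrite exchange_big /=; apply: eq_bigr => j _; rewrite mxE big_distrr /=.
by apply: eq_bigr => i _; rewrite !mxE; ring.
Qed.

Lemma normv_ge0 u : 0 <= normv u.
Proof. exact: sqrtr_ge0. Qed.

Lemma normv_sqr u : normv u ^+ 2 = dotv u u.
Proof. exact: sqr_sqrtr (dotvv_ge0 u). Qed.

Lemma normv0 : normv (0 : 'cV[R]_N) = 0.
Proof. by rewrite /normv dotv0r sqrtr0. Qed.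

Lemma normv_gt0 u : u != 0 -> 0 < normv u.
Proof.
move=> u_neq0; rewrite lt_def normv_ge0 andbT; apply: contra_neq u_neq0 => nu0.
by apply: dotvv_eq0; rewrite -normv_sqr nu0 expr0n.
Qed.

Lemma normvZ a u : normv (a *: u) = `|a| * normv u.
Proof.
by rewrite /normv dotvZl dotvZr mulrA -expr2 sqrtrM ?sqr_ge0 // sqrtr_sqr.
Qed.

Lemma normvN u : normv (- u) = normv u.
Proof. by rewrite -scaleN1r normvZ normrN1 mul1r. Qed.

(* Expand 0 <= |a u - b v|^2 with a = |v| and b = |u|. *)
Lemma dotv_le_normv u v : dotv u v <= normv u * normv v.
Proof.
have [-> | u0] := eqVneq u 0; first by rewrite dotvC dotv0r normv0 mul0r.
have [-> | v0] := eqVneq v 0; first by rewrite dotv0r normv0 mulr0.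
have uv_gt0 : 0 < normv u * normv v by rewrite mulr_gt0 ?normv_gt0.
have := dotvv_ge0 (normv v *: u - normv u *: v).
rewrite dotvBl !dotvBr !dotvZl !dotvZr (dotvC v u) -!normv_sqr.
by move=> sq_ge0; rewrite -(ler_pM2l uv_gt0); nra.
Qed.

Lemma cauchy_schwarz u v : `|dotv u v| <= normv u * normv v.
Proof.
rewrite ler_norml dotv_le_normv andbT lerNl -dotvNl.
by rewrite -(normvN u) dotv_le_normv.
Qed.

Lemma normvD u v : normv (u + v) <= normv u + normv v.
Proof.
rewrite -ler_sqr ?nnegrE ?addr_ge0 ?normv_ge0 //.
rewrite normv_sqr dotvDl !dotvDr (dotvC v u) -!normv_sqr.
by have := dotv_le_normv u v; nra.
Qed.

(* The Frobenius norm of A bounds its operator norm. *)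
Lemma mulmx_normv_bound (A : 'M[R]_N) :
  exists K, 0 <= K /\ forall z, normv (A *m z) <= K * normv z.
Proof.
pose row_of i := \col_j A i j : 'cV[R]_N.
pose S := \sum_i dotv (row_of i) (row_of i).
have S_ge0 : 0 <= S by apply: sumr_ge0 => i _; exact: dotvv_ge0.
exists (Num.sqrt S); split => [|z]; first exact: sqrtr_ge0.
have Az_row i : (A *m z) i 0 = dotv (row_of i) z.
  by rewrite mxE /dotv; apply: eq_bigr => j _; rewrite mxE.
rewrite -ler_sqr ?nnegrE ?mulr_ge0 ?sqrtr_ge0 ?normv_ge0 //.
rewrite normv_sqr exprMn sqr_sqrtr // normv_sqr {1}/dotv /S mulr_suml.
apply: ler_sum => i _; rewrite Az_row -expr2 -normv_sqr -real_normK ?num_real //.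
rewrite -!normv_sqr -exprMn ler_sqr ?nnegrE ?normr_ge0 ?mulr_ge0 ?normv_ge0 //.
exact: cauchy_schwarz.
Qed.

Lemma normv_aligned_vector q s : 0 < normv q -> 0 <= s ->
  exists z, normv z = s /\ dotv q z = s * normv q.
Proof.
move=> q_gt0 s_ge0; exists ((s / normv q) *: q); split.
  by rewrite normvZ ger0_norm ?divr_ge0 ?normv_ge0 // divfK ?gt_eqF.
by rewrite dotvZr -normv_sqr expr2 mulrA divfK ?gt_eqF.
Qed.

End EuclideanSpace.

Section SubgradientExpansion.
Variables (R : realType) (N : nat) (D : 'cV[R]_N -> Prop) (w : 'cV[R]_N -> R).
Variables (x0 p0 : 'cV[R]_N) (A : 'M[R]_N).
Hypothesis A_sym : A^T = A.

Definition expansion_error (y : 'cV[R]_N) : R :=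
  w y - w x0 - dotv p0 (y - x0) - 2^-1 * dotv (A *m (y - x0)) (y - x0).

Lemma subgradient_model_gap x z p (e1 e2 : R) :
  w x + dotv p z <= w (x + z) ->
  `|expansion_error x| <= e1 -> `|expansion_error (x + z)| <= e2 ->
  dotv (p - p0 - A *m (x - x0)) z <= 2^-1 * dotv (A *m z) z + e1 + e2.
Proof.
rewrite /expansion_error (addrAC x z) => sub_ineq.
move: (x - x0) => h; rewrite !ler_norml => /andP[err_x _] /andP[_ err_xz].
have cross : dotv (A *m z) h = dotv (A *m h) z by rewrite dotv_mulmx A_sym dotvC.
move: err_xz; rewrite mulmxDr dotvDr !dotvDl !dotvDr cross !dotvNl.
lra.
Qed.

Hypotheses (D_open : open_set D) (D_x0 : D x0).
Hypothesis w_expansion : second_order_expansion D w x0 p0 A.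

Lemma subgradient_expansion eta : 0 < eta -> exists delta, 0 < delta /\
  forall x p, D x -> 0 < normv (x - x0) < delta -> subdiff D w x p ->
    normv (p - p0 - A *m (x - x0)) <= eta * normv (x - x0).
Proof.
move=> eta_gt0; have [K [K_ge0 A_bound]] := mulmx_normv_bound A.
have Keta_gt0 : 0 < K + eta by rewrite ltr_wpDl.
(* The test step z has length lam |h|: lam <= 1 keeps x + z within 2 |h| of
   x0, and K lam <= eta together with theta = lam eta / 10 make the quadratic
   term and the two expansion errors each cost at most eta |h| / 2. *)
pose lam := eta / (K + eta); pose theta := lam * eta / 10.
have lam_gt0 : 0 < lam by rewrite divr_gt0.
have lam_le1 : lam <= 1 by rewrite ler_pdivrMr // mul1r lerDr.
have Klam : K * lam <= eta by rewrite mulrA ler_pdivrMr //; nra.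
have theta_gt0 : 0 < theta by rewrite divr_gt0 // mulr_gt0.
have [de [de_gt0 err_small]] := w_expansion theta_gt0.
have [rho [rho_gt0 ball_in_D]] := D_open D_x0.
exists (Num.min de rho / 2); split; first by rewrite divr_gt0 // lt_min de_gt0.
move=> x p D_x /andP[t_gt0]; rewrite ltr_pdivlMr // lt_min => /andP[t_de t_rho].
move=> [_ sub_ineq]; set h := x - x0 in t_gt0 t_de t_rho *.
set t := normv h in t_gt0 t_de t_rho *; set q := p - p0 - A *m h.
have [q_gt0 | ] := ltP 0 (normv q); last first.
  by move/le_trans; apply; rewrite mulr_ge0 // ltW.
have [z [z_norm qz]] := normv_aligned_vector q_gt0 (mulr_ge0 (ltW lam_gt0) (ltW t_gt0)).
have xz_x0 : normv (x + z - x0) <= 2 * t.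
  rewrite (addrAC x z); apply: le_trans (normvD _ _) _; rewrite -/h -/t z_norm; nra.
have xz_de : normv (x + z - x0) < de by apply: le_lt_trans xz_x0 _; nra.
have D_xz : D (x + z) by apply: ball_in_D; apply: le_lt_trans xz_x0 _; nra.
have sub_xz : w x + dotv p z <= w (x + z).
  by have := sub_ineq _ D_xz; rewrite addrAC subrr add0r.
have x_de : normv (x - x0) < de by rewrite -/h -/t; nra.
have := subgradient_model_gap sub_xz (err_small x D_x x_de) (err_small _ D_xz xz_de).
rewrite -/h -/t -/q qz => gap.
have Azz : dotv (A *m z) z <= K * (lam * t) ^+ 2.
  apply: le_trans (ler_norm _) (le_trans (cauchy_schwarz _ _) _).
  by rewrite -z_norm expr2 mulrA ler_wpM2r ?normv_ge0.
have sq_xz : normv (x + z - x0) ^+ 2 <= 4 * t ^+ 2.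
  by have := normv_ge0 (x + z - x0); nra.
rewrite -(ler_pM2l (mulr_gt0 lam_gt0 t_gt0)).
have lamt2_ge0 : 0 <= lam * t ^+ 2 by rewrite mulr_ge0 ?sqr_ge0 ?ltW.
have := ler_wpM2r lamt2_ge0 Klam.
have := ler_wpM2l (ltW theta_gt0) sq_xz.
rewrite /theta in gap *; nra.
Qed.

End SubgradientExpansion.

Lemma gradient_error_bound (R : realType) (N : nat) (f : 'cV[R]_N -> R)
    (g p0 p v : 'cV[R]_N) :
  `|f p - f p0 - dotv g v|
    <= `|f p - f p0 - dotv g (p - p0)| + normv g * normv (p - p0 - v).
Proof.
have -> : f p - f p0 - dotv g v
          = (f p - f p0 - dotv g (p - p0)) + dotv g (p - p0 - v).
  by rewrite [dotv g (p - p0 - v)]dotvBr; ring.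
by apply: le_trans (ler_normD _ _) _; rewrite lerD2l cauchy_schwarz.
Qed.

Theorem lemma8 (R : realType) (N : nat) (D : 'cV[R]_N -> Prop)
    (w : 'cV[R]_N -> R) (x0 p0 : 'cV[R]_N) (A : 'M[R]_N)
    (f : 'cV[R]_N -> R) (grad : 'cV[R]_N -> 'cV[R]_N) (r : R) :
  open_set D -> convex_set D -> convex_on D w -> D x0 ->
  A^T = A ->
  second_order_expansion D w x0 p0 A ->
  C1_on_ball f grad p0 r ->
  forall eps : R, 0 < eps -> exists delta : R, 0 < delta /\
    forall x, D x -> 0 < normv (x - x0) < delta ->
      forall p, subdiff D w x p ->
        `| f p - f p0 - dotv (grad p0) (A *m (x - x0)) | / normv (x - x0) <= eps.
Proof.
move=> D_open _ _ D_x0 A_sym w_exp [r_gt0 [f_grad _]] eps eps_gt0.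
have [K [K_ge0 A_bound]] := mulmx_normv_bound A.
pose G := normv (grad p0); have G_ge0 : 0 <= G := normv_ge0 _.
pose eta := eps / (2 * (G + 1)).
have eta_gt0 : 0 < eta by rewrite divr_gt0 // mulr_gt0 // ltr_wpDl.
have Geta : G * eta <= eps / 2.
  by rewrite mulrA ler_pdivrMr ?mulr_gt0 ?ltr_wpDl //; nra.
have [d1 [d1_gt0 p_approx]] := subgradient_expansion A_sym D_open D_x0 w_exp eta_gt0.
have Keta_gt0 : 0 < K + eta by rewrite ltr_wpDl.
pose eps' := eps / 2 / (K + eta).
have eps'_gt0 : 0 < eps' by rewrite !divr_gt0.
have [|d2 [d2_gt0 f_approx]] := f_grad p0 _ eps' eps'_gt0; first by rewrite subrr normv0.
exists (Num.min d1 (d2 / (K + eta))); split; first by rewrite lt_min d1_gt0 divr_gt0.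
move=> x D_x /andP[t_gt0]; rewrite lt_min ltr_pdivlMr // => /andP[t_d1 t_d2] p p_sub.
have q_small : normv (p - p0 - A *m (x - x0)) <= eta * normv (x - x0).
  by apply: p_approx => //; rewrite t_gt0.
have p_near : normv (p - p0) <= (K + eta) * normv (x - x0).
  rewrite -(subrK (A *m (x - x0)) (p - p0)); apply: le_trans (normvD _ _) _.
  by have := A_bound (x - x0); nra.
rewrite mulrC in t_d2; have f_err := f_approx p (le_lt_trans p_near t_d2).
have f_part : eps' * normv (p - p0) <= eps / 2 * normv (x - x0).
  apply: le_trans (ler_wpM2l (ltW eps'_gt0) p_near) _.
  by rewrite mulrA /eps' divfK ?lt0r_neq0.
have q_part : G * normv (p - p0 - A *m (x - x0)) <= eps / 2 * normv (x - x0).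
  apply: le_trans (ler_wpM2l G_ge0 q_small) _.
  by rewrite mulrA ler_wpM2r ?normv_ge0.
rewrite ler_pdivrMr //; apply: le_trans (gradient_error_bound _ _ _ _ _) _.
rewrite -/G; lra.
Qed.
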